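(* Let $n\geqslant 2$ and let $\alpha,\beta\in\mathcal{AM}_n$ be two elements of rank $n-1$. Then: (1) if $n\equiv 0$ or $n\equiv 3\pmod 4$, then $\alpha\mathscr{J}\beta$ in $\mathcal{AM}_n$; (2) if $n\equiv 1$ or $n\equiv 2\pmod 4$, then $\alpha\mathscr{J}\beta$ in $\mathcal{AM}_n$ if and only if $\mathrm{d}(\alpha)$ and $\mathrm{d}(\beta)$ have the same parity.
   Context: Let $\Omega_n=\{1<2<\cdots<n\}$ and $\mathcal{I}_n$ the monoid of all partial injective maps of $\Omega_n$, composed left to right; the rank of $\alpha$ is $|\mathrm{Im}(\alpha)|$. $\mathcal{AI}_n$ is the set of all $\alpha\in\mathcal{I}_n$ with $\alpha=\sigma|_{\mathrm{Dom}(\alpha)}$ for some even permutation $\sigma$ of $\Omega_n$. $\mathcal{PMI}_n$ is the set of monotone (order-preserving or order-reversing) elements of $\mathcal{I}_n$ and $\mathcal{AM}_n=\mathcal{AI}_n\cap\mathcal{PMI}_n$, a monoid. For $\alpha$ of rank $n-1$, $\mathrm{d}(\alpha)$ is the unique element of $\Omega_n\setminus\mathrm{Dom}(\alpha)$. $\mathscr{J}$ is Green's relation: $a\mathscr{J}b$ iff $MaM=MbM$. *)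

From mathcomp Require Import all_boot all_order all_fingroup.
Set Implicit Arguments. Unset Strict Implicit. Unset Printing Implicit Defensive.

(* Omega_n = {1<...<n} is modelled by 'I_n (element i : 'I_n stands for i+1).
   A partial map of Omega_n is a finite function 'I_n -> option 'I_n
   (None = undefined). *)
Definition pimap (n : nat) := {ffun 'I_n -> option 'I_n}.

Definition pinj n (a : pimap n) : Prop :=
  forall x y z, a x = Some z -> a y = Some z -> x = y.

(* composition, left to right: x (a * b) = (x a) b *)
Definition pcomp n (a b : pimap n) : pimap n := [ffun x => obind (fun y => b y) (a x)].

Definition dom n (a : pimap n) : {set 'I_n} := [set x | a x != None].
Definition rank n (a : pimap n) : nat := #|[set y | [exists x, a x == Some y]]|.

Definition in_AI n (a : pimap n) : Prop :=
  exists s : {perm 'I_n}, ~~ odd_perm s /\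
    forall x, x \in dom a -> a x = Some (s x).

Definition order_preserving n (a : pimap n) : Prop :=
  forall x y u v, a x = Some u -> a y = Some v -> (x <= y)%N -> (u <= v)%N.
Definition order_reversing n (a : pimap n) : Prop :=
  forall x y u v, a x = Some u -> a y = Some v -> (x <= y)%N -> (v <= u)%N.

Definition in_PMI n (a : pimap n) : Prop :=
  pinj a /\ (order_preserving a \/ order_reversing a).

Definition in_AM n (a : pimap n) : Prop := in_PMI a /\ in_AI a.

Definition ideal_AM n (a : pimap n) (x : pimap n) : Prop :=
  exists s t, in_AM s /\ in_AM t /\ x = pcomp (pcomp s a) t.
Definition J_AM n (a b : pimap n) : Prop :=
  forall x, ideal_AM a x <-> ideal_AM b x.

(* d(a): the unique element of Omega_n \ Dom(a), as a number in {1..n}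
   (meaningful for a of rank n-1). *)
Definition dpt n (a : pimap n) : nat :=
  match [pick x | a x == None] with Some x => (val x).+1 | None => 0 end.

From Pilot Require Import Defs.
From mathcomp Require Import all_boot all_order all_fingroup zify.
Set Implicit Arguments. Unset Strict Implicit. Unset Printing Implicit Defensive.

(* Every element of AM_n is the restriction of an even permutation that is
   monotone on the domain.  For rank n-1 elements with d(a) = d and
   d(b) = e, a lies in the ideal generated by b exactly when some even
   permutation monotone on Omega_n \ {d} maps d to e.  A permutation
   monotone on Omega_n \ {d} is the lift, sending d to e, of either the
   identity or the reversal of n-1 points, and that lift has parity
   d + e + (parity of the lifted permutation).  The reversal of n-1 points
   is odd exactly when n = 0, 3 (mod 4): then both parities of d + e are
   reachable, while otherwise d and e must have the same parity. *)

(* [dom] and [pcomp] are also names in morphism.v and ssrfun.v. *)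
Local Notation dom := Defs.dom.
Local Notation pcomp := Defs.pcomp.

Section PermRestriction.
Variable n : nat.
Implicit Types (D E : {set 'I_n}) (s t : {perm 'I_n}) (a b c : pimap n).

Definition prestr D s : pimap n := [ffun x => if x \in D then Some (s x) else None].

Definition incr_on D s := {in D &, {mono s : x y / (x <= y)%N}}.
Definition decr_on D s := {in D &, {mono s : x y /~ (x <= y)%N}}.
Definition monotone_on D s := incr_on D s \/ decr_on D s.

Lemma dom_prestr D s : dom (prestr D s) = D.
Proof. by apply/setP => x; rewrite inE ffunE; case: (x \in D). Qed.

Lemma rank_prestr D s : rank (prestr D s) = #|D|.
Proof.
rewrite /rank -(card_imset D (@perm_inj _ s)).
suff -> : [set y | [exists x, prestr D s x == Some y]] = s @: D by [].
apply/setP => y; rewrite inE; apply/existsP/imsetP => [[x]|[x xD ->]].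
  by rewrite ffunE; case: ifP => // xD /eqP [<-]; exists x.
by exists x; rewrite ffunE xD.
Qed.

Lemma pcomp_prestr D s E t :
  pcomp (prestr D s) (prestr E t) = prestr [set x in D | s x \in E] (s * t).
Proof. by apply/ffunP => x; rewrite !ffunE inE; case: (x \in D); rewrite //= ffunE permM. Qed.

Lemma dom_pcompl a b : dom (pcomp a b) \subset dom a.
Proof. by apply/subsetP => x; rewrite !inE ffunE; case: (a x). Qed.

Lemma pcompA a b c : pcomp (pcomp a b) c = pcomp a (pcomp b c).
Proof. by apply/ffunP => x; rewrite !ffunE; case: (a x) => //= y; rewrite ffunE. Qed.

Definition pid := prestr setT 1.

Lemma pcomp_pidl a : pcomp pid a = a.
Proof. by apply/ffunP => x; rewrite !ffunE inE /= perm1; case: (a x). Qed.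

Lemma pcomp_pidr a : pcomp a pid = a.
Proof. by apply/ffunP => x; rewrite !ffunE; case: (a x) => //= y; rewrite ffunE inE perm1. Qed.

Lemma monotone_onS D E s : E \subset D -> monotone_on D s -> monotone_on E s.
Proof. by move=> /subsetP sED [] h; [left|right]; apply: sub_in2 h. Qed.

Lemma monotone_on_comp D E s t : {in D, forall x, s x \in E} ->
  monotone_on D s -> monotone_on E t -> monotone_on D (s * t).
Proof.
move=> sDE [] hs [] ht; [left|right|right|left] => x y xD yD;
  by rewrite !permM ht ?sDE // hs.
Qed.

Lemma monotone_on_inv D s : monotone_on D s -> monotone_on (s @: D) s^-1.
Proof.
by case=> h; [left|right] => _ _ /imsetP [x xD ->] /imsetP [y yD ->];
  rewrite !permK h.
Qed.

Lemma homo_incr_on D s : {in D &, {homo s : x y / (x <= y)%N}} -> incr_on D s.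
Proof.
move=> h x y xD yD; apply/idP/idP => [|/h]; last exact.
apply: contraTT; rewrite -!ltnNge => yx.
by rewrite ltn_neqAle h ?(ltnW yx) // val_eqE (inj_eq perm_inj) -val_eqE neq_ltn yx.
Qed.

Lemma nhomo_decr_on D s : {in D &, {homo s : x y /~ (x <= y)%N}} -> decr_on D s.
Proof.
move=> h x y xD yD; apply/idP/idP => [|/h]; last exact.
apply: contraTT; rewrite -!ltnNge => yx.
by rewrite ltn_neqAle h ?(ltnW yx) // val_eqE (inj_eq perm_inj) -val_eqE neq_ltn yx orbT.
Qed.

Lemma AM_prestr D s : ~~ odd_perm s -> monotone_on D s -> in_AM (prestr D s).
Proof.
move=> even_s mon_s; split; last by exists s; split=> // x; rewrite dom_prestr ffunE => ->.
split.
  move=> x y z; rewrite !ffunE; case: (x \in D); case: (y \in D) => //.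
  by move=> [<-] [] /perm_inj.
by case: mon_s => h; [left|right] => x y u v; rewrite !ffunE;
  case: ifP => xD //; case: ifP => yD // [<-] [<-]; rewrite h.
Qed.

Lemma AM_prestrP a : in_AM a ->
  exists s, [/\ ~~ odd_perm s, monotone_on (dom a) s & a = prestr (dom a) s].
Proof.
move=> [[_ mon_a] [s [even_s s_ext]]]; exists s; split=> //.
  by case: mon_a => h; [left; apply: homo_incr_on|right; apply: nhomo_decr_on];
    move=> x y xD yD; apply: h; apply: s_ext.
apply/ffunP => x; rewrite ffunE; case: ifP => [/s_ext //|].
by rewrite inE => /negbFE /eqP.
Qed.

Lemma AM_pcomp a b : in_AM a -> in_AM b -> in_AM (pcomp a b).
Proof.
move=> /AM_prestrP [s [even_s mon_s ->]] /AM_prestrP [t [even_t mon_t ->]].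
rewrite pcomp_prestr; apply: AM_prestr; first by rewrite odd_permM (negbTE even_s).
apply: monotone_on_comp mon_t; first by move=> x; rewrite inE => /andP [].
by apply: monotone_onS mon_s; apply/subsetP => x; rewrite inE => /andP [].
Qed.

Lemma AM_pid : in_AM pid.
Proof. by apply: AM_prestr; [rewrite odd_perm1 | left => x y _ _; rewrite !perm1]. Qed.

Lemma ideal_AM_refl a : ideal_AM a a.
Proof.
by exists pid, pid; rewrite pcomp_pidl pcomp_pidr; split; [|split]; try exact: AM_pid.
Qed.

Lemma ideal_AM_trans a b c : ideal_AM a b -> ideal_AM b c -> ideal_AM a c.
Proof.
move=> [s [t [As [At ->]]]] [s' [t' [As' [At' ->]]]].
exists (pcomp s' s), (pcomp t t'); do ![split; first exact: AM_pcomp].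
by rewrite !pcompA.
Qed.

Lemma J_AM_ideal a b : J_AM a b <-> ideal_AM b a /\ ideal_AM a b.
Proof.
split=> [J | [ba ab] x]; last by split; apply: ideal_AM_trans.
by split; [apply/(J a) | apply/(J b)]; apply: ideal_AM_refl.
Qed.

Lemma perm_setC1 s d : {in [set~ d], forall x, s x \in [set~ s d]}.
Proof. by move=> x; rewrite !in_setC1 (inj_eq perm_inj). Qed.

Lemma ideal_AM_setC1_perm a b da db : in_AM b ->
  dom a = [set~ da] -> dom b = [set~ db] -> ideal_AM b a ->
  exists s, [/\ ~~ odd_perm s, monotone_on [set~ da] s & s da = db].
Proof.
move=> Ab dom_a dom_b [s [t [As [_ ea]]]].
have [σ [even_σ mon_σ es]] := AM_prestrP As.
have [σb [_ _ eb]] := AM_prestrP Ab.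
have sub : [set~ da] \subset [set x in dom s | σ x \in [set~ db]].
  have := dom_pcompl (pcomp s b) t.
  by rewrite -ea dom_a es eb dom_b pcomp_prestr !dom_prestr.
have σ_da : σ da = db.
  apply: contraTeq sub => ne; apply/subsetPn; exists ((σ^-1)%g db).
    by rewrite in_setC1 -(inj_eq (@perm_inj _ σ)) permKV eq_sym.
  by rewrite inE permKV !inE eqxx andbF.
exists σ; split=> //; apply: monotone_onS mon_σ.
by apply: subset_trans sub _; apply/subsetP => x; rewrite inE => /andP [].
Qed.

Lemma ideal_AM_setC1_of_perm a b da db s : in_AM a -> in_AM b ->
  dom a = [set~ da] -> dom b = [set~ db] ->
  ~~ odd_perm s -> monotone_on [set~ da] s -> s da = db -> ideal_AM b a.
Proof.
move=> Aa Ab dom_a dom_b even_s mon_s s_da.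
have [σa [even_a mon_a ea]] := AM_prestrP Aa.
have [σb [even_b mon_b eb]] := AM_prestrP Ab.
rewrite dom_a in mon_a ea; rewrite dom_b in mon_b eb.
have s_into : {in [set~ da], forall x, s x \in [set~ db]}.
  by rewrite -s_da; apply: perm_setC1.
pose p := (s * σb)%g.
have mon_p : monotone_on [set~ da] p by apply: monotone_on_comp mon_b.
(* The right factor undoes [s * σb] on its image and then applies [σa]. *)
exists (prestr [set~ da] s), (prestr (p @: [set~ da]) (p^-1 * σa)).
split; first exact: AM_prestr.
split.
  apply: AM_prestr.
    by rewrite odd_permM odd_permV odd_permM (negbTE even_s) (negbTE even_b) (negbTE even_a).
  apply: monotone_on_comp (monotone_on_inv mon_p) mon_a.
  by move=> _ /imsetP [x xD ->]; rewrite permK.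
rewrite ea eb !pcomp_prestr mulgA -/p mulgV mul1g; congr prestr; apply/setP => x.
rewrite !inE; case: eqVneq => //= xd.
by rewrite -in_setC1 s_into ?imset_f // in_setC1.
Qed.

Lemma ideal_AM_setC1P a b da db : in_AM a -> in_AM b ->
  dom a = [set~ da] -> dom b = [set~ db] ->
  ideal_AM b a <-> exists s, [/\ ~~ odd_perm s, monotone_on [set~ da] s & s da = db].
Proof.
move=> Aa Ab dom_a dom_b; split; first exact: ideal_AM_setC1_perm.
by move=> [s [even_s mon_s s_da]]; apply: ideal_AM_setC1_of_perm mon_s s_da.
Qed.

End PermRestriction.

Lemma in_setC1_lift m (d : 'I_m.+1) (P : 'I_m.+1 -> 'I_m.+1 -> Prop) :
  {in [set~ d] &, forall x y, P x y} <-> forall k k', P (lift d k) (lift d k').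
Proof.
split=> [h k k' | h x y]; first by apply: h; rewrite in_setC1 eq_sym neq_lift.
by case: (unliftP d x) => [k ->|->]; case: (unliftP d y) => [k' ->|->];
  rewrite ?in_setC1 ?eqxx ?andbF //; move=> *; apply: h.
Qed.

Lemma lift_permP m (s : {perm 'I_m.+1}) d : exists t, s = lift_perm d (s d) t.
Proof.
pose g k := odflt k (unlift (s d) (s (lift d k))).
have s_lift k : s (lift d k) = lift (s d) (g k).
  rewrite /g; case: unliftP => [j -> //| /perm_inj /eqP].
  by rewrite eq_sym (negbTE (neq_lift d k)).
have g_inj : injective g.
  by move=> k k' e; apply: (@lift_inj _ d); apply: (@perm_inj _ s); rewrite !s_lift e.
exists (perm g_inj); apply/permP => x; case: (unliftP d x) => [k ->|->].
  by rewrite lift_perm_lift permE s_lift.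
by rewrite lift_perm_id.
Qed.

Lemma leq_mono_perm m (t : {perm 'I_m}) :
  {mono t : x y / (x <= y)%N} -> forall i : 'I_m, (i <= t i)%N.
Proof.
move=> t_mono [i lt_im]; elim: i lt_im => [//|i IH] lt_im.
apply: leq_ltn_trans (IH (ltnW lt_im)) _.
by rewrite ltnNge t_mono /= ltnn.
Qed.

Lemma mono_perm_id m (t : {perm 'I_m}) : {mono t : x y / (x <= y)%N} -> t = 1%g.
Proof.
move=> t_mono; have tV_mono : {mono (t^-1)%g : x y / (x <= y)%N}.
  by move=> x y; rewrite -t_mono !permKV.
apply/permP => i; apply/val_inj/eqP; rewrite perm1 eqn_leq leq_mono_perm // andbT.
by have := leq_mono_perm tV_mono (t i); rewrite permK.
Qed.

Definition rev_perm m : {perm 'I_m} := perm (@rev_ord_inj m).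

Lemma rev_permK m : (rev_perm m * rev_perm m)%g = 1%g.
Proof. by apply/permP => x; rewrite permM !permE rev_ordK. Qed.

Lemma rev_perm_mono m : {mono rev_perm m : x y /~ (x <= y)%N}.
Proof. by move=> x y; rewrite !permE /=; have := ltn_ord x; have := ltn_ord y; lia. Qed.

Lemma nmono_perm_rev m (t : {perm 'I_m}) : {mono t : x y /~ (x <= y)%N} -> t = rev_perm m.
Proof.
move=> t_mono; have e : (t * rev_perm m)%g = 1%g.
  by apply: mono_perm_id => x y; rewrite !permM rev_perm_mono t_mono.
by rewrite -[t]mulg1 -(rev_permK m) mulgA e mul1g.
Qed.

Lemma rev_permS m : rev_perm m.+1 = lift_perm ord0 ord_max (rev_perm m).
Proof.
apply/permP => x; case: (unliftP ord0 x) => [k ->|->].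
  rewrite lift_perm_lift !permE; apply: ord_inj.
  by rewrite lift_max /= /bump leq0n add1n subSS.
by rewrite lift_perm_id permE; apply: ord_inj; rewrite /= subn1.
Qed.

Lemma odd_rev_perm m : odd_perm (rev_perm m) = (2 <= m %% 4).
Proof.
elim: m => [|m IH].
  by rewrite (_ : rev_perm 0 = 1%g) ?odd_perm1 //; apply/permP => -[].
rewrite rev_permS odd_lift_perm IH /= -(odd_mod m (d := 4)) // -[m.+1]addn1 -modnDml.
by case: (m %% 4) (ltn_pmod m (isT : 0 < 4)) => [|[|[|[|r]]]].
Qed.

Lemma incr_on_lift_perm m (d e : 'I_m.+1) t :
  incr_on [set~ d] (lift_perm d e t) <-> {mono t : x y / (x <= y)%N}.
Proof.
split=> [h k k' | h].
  by have := (in_setC1_lift d _).1 h k k'; rewrite !lift_perm_lift !leq_bump2.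
by apply/in_setC1_lift => k k'; rewrite !lift_perm_lift !leq_bump2 h.
Qed.

Lemma decr_on_lift_perm m (d e : 'I_m.+1) t :
  decr_on [set~ d] (lift_perm d e t) <-> {mono t : x y /~ (x <= y)%N}.
Proof.
split=> [h k k' | h].
  by have := (in_setC1_lift d _).1 h k k'; rewrite !lift_perm_lift !leq_bump2.
by apply/in_setC1_lift => k k'; rewrite !lift_perm_lift !leq_bump2 h.
Qed.

Lemma monotone_on_lift_perm m (d e : 'I_m.+1) t :
  monotone_on [set~ d] (lift_perm d e t) <-> t = 1%g \/ t = rev_perm m.
Proof.
rewrite /monotone_on incr_on_lift_perm decr_on_lift_perm.
split=> [[/mono_perm_id | /nmono_perm_rev] | [] ->]; [by left | by right | left | right].
  by move=> x y; rewrite !perm1.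
exact: rev_perm_mono.
Qed.

Lemma exists_even_monotone_setC1 m (d e : 'I_m.+1) :
  (exists s, [/\ ~~ odd_perm s, monotone_on [set~ d] s & s d = e])
  <-> odd d = odd e \/ odd_perm (rev_perm m).
Proof.
split=> [[s [even_s mon_s s_d]] | h].
  have [t st] := lift_permP s d; move: even_s mon_s; rewrite st s_d.
  rewrite monotone_on_lift_perm odd_lift_perm => even_s [] t_eq;
    move: even_s; rewrite t_eq ?odd_perm1;
    by case: (odd d); case: (odd e); case: (odd_perm _) => //=; auto.
exists (lift_perm d e (if odd d == odd e then 1%g else rev_perm m)).
split; [rewrite odd_lift_perm | apply/monotone_on_lift_perm | exact: lift_perm_id].
  case: eqP => [->|ne]; first by rewrite odd_perm1; case: (odd e).
  by case: h => [//|->]; case: (odd d) ne; case: (odd e).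
by case: eqP; [left | right].
Qed.

Lemma rank_AM_setC1 m (a : pimap m.+1) :
  in_AM a -> rank a = m -> exists d, dom a = [set~ d].
Proof.
move=> /AM_prestrP [s [_ _ ea]] ra.
have card_dom : #|dom a| = m by rewrite -[RHS]ra ea rank_prestr dom_prestr.
have /cards1P [d dom_d] : #|~: dom a| == 1.
  by have := cardsC (dom a); rewrite card_ord card_dom; lia.
by exists d; rewrite -dom_d setCK.
Qed.

Lemma dpt_setC1 n (a : pimap n) d : dom a = [set~ d] -> dpt a = d.+1.
Proof.
move=> dom_a; rewrite /dpt; case: pickP => [x /eqP ax | none].
  have : x \notin dom a by rewrite inE ax.
  by rewrite dom_a in_setC1 negbK => /eqP ->.
have : d \notin dom a by rewrite dom_a in_setC1 eqxx.
by rewrite inE negbK => /eqP ad; have := none d; rewrite ad eqxx.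
Qed.

Theorem proposition2p5 (n : nat) (a b : pimap n) :
  2 <= n -> in_AM a -> in_AM b -> rank a = n.-1 -> rank b = n.-1 ->
  ((n %% 4 = 0 \/ n %% 4 = 3) -> J_AM a b) /\
  ((n %% 4 = 1 \/ n %% 4 = 2) -> (J_AM a b <-> odd (dpt a) = odd (dpt b))).
Proof.
case: n a b => [//|m] a b _ Aa Ab ra rb.
have [da dom_a] := rank_AM_setC1 Aa ra.
have [db dom_b] := rank_AM_setC1 Ab rb.
have J_parity : J_AM a b <-> odd da = odd db \/ 2 <= m %% 4.
  rewrite J_AM_ideal (ideal_AM_setC1P Aa Ab dom_a dom_b).
  rewrite (ideal_AM_setC1P Ab Aa dom_b dom_a).
  rewrite !exists_even_monotone_setC1 odd_rev_perm.
  by split=> [[] // | [e | h]]; split; auto.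
rewrite (dpt_setC1 dom_a) (dpt_setC1 dom_b) J_parity /=.
split=> [h4 | h4]; first by right; lia.
have -> : (2 <= m %% 4) = false by lia.
by split=> [[-> | //] | /negb_inj]; auto.
Qed.
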